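(* Let $s=0$ and $\lambda\in\mathbb{C}$. The space of even superderivations of $\mathfrak{L}^0_\lambda$ of degree $0$ equals $$\mathrm{span}_{\mathbb{C}}\{\mathrm{ad}\,L_0,\ \mathrm{ad}\,I_0\}\oplus\mathbb{C}\,\partial_G\oplus\delta_{\lambda,0}\,\mathbb{C}\,\partial_D,$$ where the last summand is $\mathbb{C}\partial_D$ if $\lambda=0$ and $\{0\}$ if $\lambda\neq0$. In particular $\partial_G$ is a superderivation for every $\lambda$, and $\partial_D$ is a superderivation when $\lambda=0$.
   Context: For $s\in\{0,\tfrac12\}$ and $\lambda\in\mathbb{C}$, $\mathfrak{L}^s_\lambda$ is the complex Lie superalgebra with basis $\{L_m,I_m,G_p,H_p : m\in\mathbb{Z},\ p\in s+\mathbb{Z}\}$, even part spanned by the $L_m,I_m$, odd part spanned by the $G_p,H_p$, and brackets $[L_m,L_n]=(m-n)L_{m+n}$, $[L_m,I_n]=(m-n)I_{m+n}$, $[L_m,H_p]=(\tfrac m2-p)H_{m+p}$, $[L_m,G_p]=(\tfrac m2-p)G_{m+p}+\lambda(m+1)H_{m+p}$, $[I_m,G_p]=(m-2p)H_{m+p}$, $[G_p,G_q]=I_{p+q}$, plus those given by super-antisymmetry $[y,x]=-(-1)^{|x||y|}[x,y]$; all other brackets of basis elements are zero. $\mathfrak{L}_r$ is spanned by basis elements of index $r$. A superderivation of parity $a$ is a linear map $D$ shifting parity by $a$ with $D([x,y])=[D(x),y]+(-1)^{a|x|}[x,D(y)]$; it has degree $r$ if $D(\mathfrak{L}_q)\subset\mathfrak{L}_{q+r}$.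 $\mathrm{ad}\,x(y)=[x,y]$. The linear maps $\partial_G,\partial_D$ are defined by $\partial_G(L_m)=\partial_G(I_m)=\partial_G(H_p)=0$, $\partial_G(G_p)=H_p$; $\partial_D(L_m)=0$, $\partial_D(I_m)=2I_m$, $\partial_D(G_p)=G_p$, $\partial_D(H_p)=3H_p$. *)

(* The Lie superalgebra L^0_lambda over a field C modelling
   the complex numbers (any numClosedFieldType, e.g. algC). *)
From HB Require Import structures.
From mathcomp Require Import all_boot all_order all_algebra.
Set Implicit Arguments. Unset Strict Implicit. Unset Printing Implicit Defensive.
Import Order.TTheory GRing.Theory Num.Theory.
Local Open Scope ring_scope.

(* Since s = 0, all indices are
   integers.  An element of the algebra is a finite linear combination of the
   basis vectors X_m (X in {L,I,G,H}, m : int); we store, for each kind k, the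
   coefficients (X_m)_m as the coefficients of a polynomial, where the integer
   index m is encoded as the natural number enc m (a bijection int <-> nat). *)
Definition kL : 'I_4 := @Ordinal 4 0 isT.
Definition kI : 'I_4 := @Ordinal 4 1 isT.
Definition kG : 'I_4 := @Ordinal 4 2 isT.
Definition kH : 'I_4 := @Ordinal 4 3 isT.

Definition enc (m : int) : nat :=
  match m with Posz n => n.*2 | Negz n => n.*2.+1 end.
Definition dec (i : nat) : int := if odd i then Negz i./2 else Posz i./2.

Definition SA (C : numClosedFieldType) := {ffun 'I_4 -> {poly C}}.

Section Alg.
Variable C : numClosedFieldType.
Variable lam : C.

Definition coefV (v : SA C) (k : 'I_4) (m : int) : C := (v k)`_(enc m).

Definition bas (k : 'I_4) (m : int) : SA C :=
  [ffun k' => if k' == k then 'X^(enc m) else 0].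

Definition half (m : int) : C := m%:~R / 2%:R.

Definition brb (k : 'I_4) (m : int) (k' : 'I_4) (n : int) : SA C :=
  match nat_of_ord k, nat_of_ord k' with
  | 0, 0 => (m - n)%:~R *: bas kL (m + n)%R
  | 0, 1 => (m - n)%:~R *: bas kI (m + n)%R
  | 1, 0 => - ((n - m)%:~R *: bas kI (n + m)%R)
  | 0, 3 => (half m - n%:~R) *: bas kH (m + n)%R
  | 3, 0 => - ((half n - m%:~R) *: bas kH (n + m)%R)
  | 0, 2 => (half m - n%:~R) *: bas kG (m + n)%R
            + (lam * (m + 1)%:~R) *: bas kH (m + n)%R
  | 2, 0 => - ((half n - m%:~R) *: bas kG (n + m)%R
            + (lam * (n + 1)%:~R) *: bas kH (n + m)%R)
  | 1, 2 => (m - 2 * n)%:~R *: bas kH (m + n)%R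
  | 2, 1 => - ((n - 2 * m)%:~R *: bas kH (n + m)%R)
  | 2, 2 => bas kI (m + n)%R
  | _, _ => 0
  end.

Definition bracket (x y : SA C) : SA C :=
  \sum_(k < 4) \sum_(i < size (x k)) \sum_(k' < 4) \sum_(j < size (y k'))
     ((x k)`_i * (y k')`_j) *: brb k (dec i) k' (dec j).

Definition ad (x : SA C) : SA C -> SA C := fun y => bracket x y.

Definition is_even (v : SA C) : Prop := v kG = 0 /\ v kH = 0.
Definition is_odd (v : SA C) : Prop := v kL = 0 /\ v kI = 0.

Definition in_deg (q : int) (v : SA C) : Prop :=
  forall (k : 'I_4) (i : nat), i <> enc q -> (v k)`_i = 0.

Definition is_linear (D : SA C -> SA C) : Prop :=
  forall (a : C) (x y : SA C), D (a *: x + y) = a *: D x + D y.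

(* superderivation of parity a (a = false: even, a = true: odd) *)
Definition superder (a : bool) (D : SA C -> SA C) : Prop :=
  [/\ is_linear D,
      (forall x, is_even x -> if a then is_odd (D x) else is_even (D x)),
      (forall x, is_odd x -> if a then is_even (D x) else is_odd (D x)) &
      forall x y,
        (is_even x ->
           D (bracket x y) = bracket (D x) y + bracket x (D y)) /\
        (is_odd x ->
           D (bracket x y) = bracket (D x) y + (-1) ^+ a *: bracket x (D y))].

Definition has_degree (r : int) (D : SA C -> SA C) : Prop :=
  forall q x, in_deg q x -> in_deg (q + r) (D x).

Definition partG (v : SA C) : SA C :=
  [ffun k => if k == kH then v kG else 0].

(* partial_D : L_m |-> 0, I_m |-> 2 I_m, G_p |-> G_p, H_p |-> 3 H_p *)
Definition partD (v : SA C) : SA C :=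
  [ffun k : 'I_4 => (nth 0%N [:: 0; 2; 1; 3]%N k)%:R *: v k].

End Alg.

(* A degree-0 even superderivation D sends each basis vector X_m into the span
   of the basis vectors of index m and of the same parity, so it is described by
   eight scalar functions of m (the coefficients [dcoef]).  The Leibniz rule on
   the brackets [L_m,L_n], [L_m,I_n], [G_m,G_n], [I_m,G_n] and [L_m,G_n] turns
   into functional equations over Z: off the diagonal m = n they are Cauchy
   additivity, so these functions are affine in m, and everything is determined
   by four constants, subject only to lam * e0 = 0, which comes from [L_0,G_1].
   Those constants are the coordinates of D on ad L_0, ad I_0, d_G and d_D.
   Conversely each of these maps satisfies the Leibniz rule on pairs of basis
   vectors (d_D only when lam = 0), and evaluating a vanishing combination at
   L_1 and G_0 shows that the sum is direct. *)

From Pilot Require Import Defs.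
From HB Require Import structures.
From mathcomp Require Import all_boot all_order all_algebra.
From mathcomp Require Import ring zify.
Import GRing.Theory Num.Theory.
Local Open Scope ring_scope.
Set Implicit Arguments. Unset Strict Implicit.

Lemma encK : cancel enc dec.
Proof.
case=> n; rewrite /dec /=; first by rewrite odd_double doubleK.
by rewrite odd_double /= uphalf_double.
Qed.

Lemma decK : cancel dec enc.
Proof.
move=> i; rewrite /dec; have := odd_double_half i.
by case: (odd i) => /= h; rewrite -[RHS]h ?add1n ?add0n -?muln2 // -!mul2n.
Qed.

Section Coordinates.
Variable C : numClosedFieldType.
Local Notation SA := (SA C).
Local Notation bas := (bas C).

Lemma SA_addE (u w : SA) k : (u + w) k = u k + w k. Proof. by rewrite ffunE. Qed.
Lemma SA_scaleE (u : SA) a k : (a *: u) k = a *: u k. Proof. by rewrite ffunE. Qed.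
Lemma SA_oppE (u : SA) k : (- u) k = - u k. Proof. by rewrite ffunE. Qed.
Lemma SA_0E k : (0 : SA) k = 0. Proof. by rewrite ffunE. Qed.

Lemma coef_bas k q k' i : (bas k q k')`_i = ((k' == k) && (i == enc q))%:R.
Proof. by rewrite ffunE; case: eqP => _ /=; rewrite ?coefXn ?coef0. Qed.

Definition coordE :=
  (SA_addE, SA_scaleE, SA_oppE, SA_0E, coefD, coefZ, coefN, coef0, coef_bas).

Lemma SA_coefP (u w : SA) : (forall k i, (u k)`_i = (w k)`_i) -> u = w.
Proof. by move=> h; apply/ffunP => k; apply/polyP => i; apply: h. Qed.

Lemma I4P (k : 'I_4) : [\/ k = kL, k = kI, k = kG | k = kH].
Proof.
case: k => [[|[|[|[|n]]]] lt4] //.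
- by constructor 1; apply: val_inj.
- by constructor 2; apply: val_inj.
- by constructor 3; apply: val_inj.
- by constructor 4; apply: val_inj.
Qed.

Definition bas_ext (T : 'I_4 -> nat -> SA) (x : SA) : SA :=
  \sum_(k < 4) \sum_(i < size (x k)) (x k)`_i *: T k i.

Lemma bas_ext_widen T (x : SA) N : (forall k, size (x k) <= N)%N ->
  bas_ext T x = \sum_(k < 4) \sum_(i < N) (x k)`_i *: T k i.
Proof.
move=> leN; apply: eq_bigr => k _.
rewrite (big_ord_widen _ (fun i => (x k)`_i *: T k i) (leN k)) big_mkcond /=.
by apply: eq_bigr => i _; case: ltnP => // ?; rewrite nth_default ?scale0r.
Qed.

Lemma eq_bas_ext T1 T2 x : T1 =2 T2 -> bas_ext T1 x = bas_ext T2 x.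
Proof. by move=> eT; apply: eq_bigr => k _; apply: eq_bigr => i _; rewrite eT. Qed.

Lemma bas_ext_comb a T1 T2 x :
  bas_ext (fun k i => a *: T1 k i + T2 k i) x = a *: bas_ext T1 x + bas_ext T2 x.
Proof.
rewrite /bas_ext scaler_sumr -big_split; apply: eq_bigr => k _.
rewrite scaler_sumr -big_split; apply: eq_bigr => i _.
by rewrite scalerDr !scalerA mulrC.
Qed.

Lemma bas_ext_bas T k m : bas_ext T (bas k m) = T k (enc m).
Proof.
rewrite /bas_ext (bigD1 k) //= [X in _ + X]big1 => [|k' nk]; last first.
  by rewrite ffunE (negbTE nk) size_poly0 big_ord0.
rewrite ffunE eqxx size_polyXn big_ord_recr /= big1 => [|i _].
  by rewrite coefXn eqxx scale1r add0r addr0.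
by rewrite coefXn ltn_eqF ?scale0r.
Qed.

Lemma SA_bas_expand (v : SA) : v = bas_ext (fun k i => bas k (dec i)) v.
Proof.
apply: SA_coefP => k j; rewrite /bas_ext sum_ffunE coef_sum.
rewrite (bigD1 k) //= [X in _ + X]big1 => [|k' nk]; last first.
  rewrite sum_ffunE coef_sum big1 // => i _.
  by rewrite !coordE (eq_sym k) (negbTE nk) mulr0.
rewrite addr0 sum_ffunE coef_sum -{1}[v k]coefK poly_def coef_sum.
apply: eq_bigr => i _; by rewrite !coordE coefXn decK eqxx.
Qed.

Lemma is_even0 : is_even (0 : SA).
Proof. by split; rewrite SA_0E. Qed.

Lemma is_odd0 : is_odd (0 : SA).
Proof. by split; rewrite SA_0E. Qed.

Lemma in_deg0 q : in_deg q (0 : SA).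
Proof. by move=> k i _; rewrite SA_0E coef0. Qed.

Lemma is_even_lincomb a (u w : SA) :
  is_even u -> is_even w -> is_even (a *: u + w).
Proof.
by move=> [uG uH] [wG wH]; split; rewrite SA_addE SA_scaleE ?uG ?uH ?wG ?wH scaler0 addr0.
Qed.

Lemma is_odd_lincomb a (u w : SA) :
  is_odd u -> is_odd w -> is_odd (a *: u + w).
Proof.
by move=> [uL uI] [wL wI]; split; rewrite SA_addE SA_scaleE ?uL ?uI ?wL ?wI scaler0 addr0.
Qed.

Lemma in_deg_lincomb q a (u w : SA) :
  in_deg q u -> in_deg q w -> in_deg q (a *: u + w).
Proof. by move=> uq wq k i iq; rewrite !coordE uq // wq // mulr0 addr0. Qed.

Lemma is_even_bas2 a b m : is_even (a *: bas kL m + b *: bas kI m).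
Proof. by split; apply/polyP => i; rewrite !coordE /= !mulr0 addr0. Qed.

Lemma is_odd_bas2 a b m : is_odd (a *: bas kG m + b *: bas kH m).
Proof. by split; apply/polyP => i; rewrite !coordE /= !mulr0 addr0. Qed.

Lemma in_deg_bas2 a b k k' m : in_deg m (a *: bas k m + b *: bas k' m).
Proof. by move=> k'' i /eqP/negbTE im; rewrite !coordE im !andbF !mulr0 addr0. Qed.

Lemma even_deg_expand q (v : SA) : in_deg q v -> is_even v ->
  v = (v kL)`_(enc q) *: bas kL q + (v kI)`_(enc q) *: bas kI q.
Proof.
move=> vq [vG vH]; apply: SA_coefP => k i; rewrite !coordE.
have [->|iq] := eqVneq i (enc q); last first.
  by rewrite !andbF !mulr0 addr0 vq //; apply/eqP.
by case: (I4P k) => ->; rewrite /= ?vG ?vH ?coef0; ring.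
Qed.

Lemma odd_deg_expand q (v : SA) : in_deg q v -> is_odd v ->
  v = (v kG)`_(enc q) *: bas kG q + (v kH)`_(enc q) *: bas kH q.
Proof.
move=> vq [vL vI]; apply: SA_coefP => k i; rewrite !coordE.
have [->|iq] := eqVneq i (enc q); last first.
  by rewrite !andbF !mulr0 addr0 vq //; apply/eqP.
by case: (I4P k) => ->; rewrite /= ?vL ?vI ?coef0; ring.
Qed.

Lemma in_deg_bas k m : in_deg m (bas k m).
Proof. by move=> k' i /eqP/negbTE im; rewrite coef_bas im andbF. Qed.

Lemma is_even_bas k m : k = kL \/ k = kI -> is_even (bas k m).
Proof. by case=> ->; split; apply/polyP => i; rewrite coef_bas coef0. Qed.

Lemma is_odd_bas k m : k = kG \/ k = kH -> is_odd (bas k m).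
Proof. by case=> ->; split; apply/polyP => i; rewrite coef_bas coef0. Qed.

Lemma bas2_eq0 (a b : C) k k' m :
  k != k' -> a *: bas k m + b *: bas k' m = 0 -> a = 0 /\ b = 0.
Proof.
move=> kk' e; have ek k'' := congr1 (fun v : SA => (v k'')`_(enc m)) e.
have := ek k; have := ek k'.
rewrite !coordE !eqxx (negbTE kk') eq_sym (negbTE kk') /=.
by rewrite !mulr0 !mulr1 add0r addr0 => -> ->.
Qed.

Definition SA_size (x : SA) : nat := \max_(k < 4) size (x k).

Lemma bas_ext_linear T : is_linear (bas_ext T).
Proof.
move=> a x y; set N := maxn (SA_size x) (SA_size y).
have leNx k : (size (x k) <= N)%N by rewrite leq_max leq_bigmax.
have leNy k : (size (y k) <= N)%N by rewrite leq_max leq_bigmax orbT.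
have leNxy k : (size ((a *: x + y)%R k) <= N)%N.
  rewrite SA_addE SA_scaleE (leq_trans (size_polyD _ _)) // geq_max leNy andbT.
  exact: leq_trans (size_scale_leq _ _) (leNx k).
rewrite !(bas_ext_widen T leNx, bas_ext_widen T leNy, bas_ext_widen T leNxy).
rewrite scaler_sumr -big_split; apply: eq_bigr => k _.
rewrite scaler_sumr -big_split; apply: eq_bigr => i _.
by rewrite !coordE scalerDl scalerA.
Qed.

End Coordinates.

Section LinearMaps.
Variable C : numClosedFieldType.
Local Notation SA := (SA C).
Local Notation bas := (bas C).

Section OneMap.
Variable F : SA -> SA.
Hypothesis linF : is_linear F.

Lemma lin0 : F 0 = 0.
Proof.
have := linF 1 0 0; rewrite scale1r addr0 scale1r => F0.
by apply: (addrI (F 0)); rewrite addr0 -F0.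
Qed.

Lemma linD u w : F (u + w) = F u + F w.
Proof. by have := linF 1 u w; rewrite !scale1r. Qed.

Lemma linZ a u : F (a *: u) = a *: F u.
Proof. by have := linF a u 0; rewrite !addr0 lin0 addr0. Qed.

Lemma linN u : F (- u) = - F u.
Proof. by rewrite -scaleN1r linZ scaleN1r. Qed.

Lemma lin_sum I r (P : pred I) (G : I -> SA) :
  F (\sum_(i <- r | P i) G i) = \sum_(i <- r | P i) F (G i).
Proof. by elim/big_rec2: _ => [|i y1 y2 _ <-]; rewrite ?lin0 ?linD. Qed.

Lemma lin_bas_ext (v : SA) : F v = bas_ext (fun k i => F (bas k (dec i))) v.
Proof.
rewrite {1}(SA_bas_expand v) lin_sum; apply: eq_bigr => k _.
by rewrite lin_sum; apply: eq_bigr => i _; rewrite linZ.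
Qed.

Lemma lin_ind (P : SA -> Prop) : P 0 ->
  (forall a u w, P u -> P w -> P (a *: u + w)) ->
  forall v : SA, (forall k i, (v k)`_i != 0 -> P (F (bas k (dec i)))) -> P (F v).
Proof.
move=> P0 PC v Pv; rewrite lin_bas_ext.
have PD u w : P u -> P w -> P (u + w).
  by move=> Pu Pw; rewrite -[u]scale1r; apply: PC.
apply: (big_ind P) => // k _; apply: (big_ind P) => // i _.
have [->|nz] := eqVneq (v k)`_i 0; first by rewrite scale0r.
by rewrite -[_ *: _]addr0; apply: PC => //; apply: Pv.
Qed.

End OneMap.

Lemma lin_bas_eq (F G : SA -> SA) : is_linear F -> is_linear G ->
  (forall k m, F (bas k m) = G (bas k m)) -> F =1 G.
Proof.
move=> linF linG eFG v; rewrite (lin_bas_ext linF) (lin_bas_ext linG).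
by apply: eq_bas_ext => k i; apply: eFG.
Qed.

Lemma is_linear0 : is_linear (fun _ : SA => 0).
Proof. by move=> a x y; rewrite scaler0 addr0. Qed.

Lemma is_linearD (F G : SA -> SA) : is_linear F -> is_linear G ->
  is_linear (fun v => F v + G v).
Proof.
move=> linF linG a x y; rewrite (linD linF) (linZ linF) (linD linG) (linZ linG).
by rewrite scalerDr addrACA.
Qed.

Lemma is_linearZ (F : SA -> SA) a : is_linear F -> is_linear (fun v => a *: F v).
Proof.
by move=> linF b x y; rewrite (linD linF) (linZ linF) scalerDr !scalerA mulrC.
Qed.

Lemma is_linear_comp (F G : SA -> SA) : is_linear F -> is_linear G ->
  is_linear (fun v => F (G v)).
Proof. by move=> linF linG a x y; rewrite linG linF. Qed.

End LinearMaps.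

Section Algebra.
Variable C : numClosedFieldType.
Variable lam : C.
Local Notation SA := (SA C).
Local Notation bas := (bas C).
Local Notation bracket := (bracket lam).
Local Notation brb := (brb lam).
Local Notation half := (Defs.half C).
Local Notation partG := (@partG C).
Local Notation partD := (@partD C).

Lemma bracket_bas_ext (x y : SA) : bracket x y =
  bas_ext (fun k i => bas_ext (fun k' j => brb k (dec i) k' (dec j)) y) x.
Proof.
apply: eq_bigr => k _; apply: eq_bigr => i _; rewrite scaler_sumr.
by apply: eq_bigr => k' _; rewrite scaler_sumr; apply: eq_bigr => j _; rewrite scalerA.
Qed.

Lemma bracket_bas k m k' n : bracket (bas k m) (bas k' n) = brb k m k' n.
Proof. by rewrite bracket_bas_ext !bas_ext_bas !encK. Qed.

Lemma is_linear_bracketl (y : SA) : is_linear (bracket^~ y).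
Proof. by move=> a x x'; rewrite !bracket_bas_ext bas_ext_linear. Qed.

Lemma is_linear_bracketr (x : SA) : is_linear (bracket x).
Proof.
move=> a y y'; rewrite !bracket_bas_ext -bas_ext_comb.
by apply: eq_bas_ext => k i; rewrite bas_ext_linear.
Qed.

Lemma bracketDl x x' y : bracket (x + x') y = bracket x y + bracket x' y.
Proof. exact: (linD (is_linear_bracketl y)). Qed.
Lemma bracketZl a x y : bracket (a *: x) y = a *: bracket x y.
Proof. exact: (linZ (is_linear_bracketl y)). Qed.
Lemma bracketNl x y : bracket (- x) y = - bracket x y.
Proof. exact: (linN (is_linear_bracketl y)). Qed.
Lemma bracket0l y : bracket 0 y = 0.
Proof. exact: (lin0 (is_linear_bracketl y)). Qed.
Lemma bracketDr x y y' : bracket x (y + y') = bracket x y + bracket x y'.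
Proof. exact: (linD (is_linear_bracketr x)). Qed.
Lemma bracketZr a x y : bracket x (a *: y) = a *: bracket x y.
Proof. exact: (linZ (is_linear_bracketr x)). Qed.
Lemma bracketNr x y : bracket x (- y) = - bracket x y.
Proof. exact: (linN (is_linear_bracketr x)). Qed.
Lemma bracket0r x : bracket x 0 = 0.
Proof. exact: (lin0 (is_linear_bracketr x)). Qed.

Definition bracket_linE := (bracketDl, bracketZl, bracketNl, bracket0l,
  bracketDr, bracketZr, bracketNr, bracket0r).

Lemma brbLL m n : brb kL m kL n = (m - n)%:~R *: bas kL (m + n). Proof. by []. Qed.
Lemma brbLI m n : brb kL m kI n = (m - n)%:~R *: bas kI (m + n). Proof. by []. Qed.
Lemma brbLG m n : brb kL m kG n =
  (half m - n%:~R) *: bas kG (m + n) + (lam * (m + 1)%:~R) *: bas kH (m + n).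
Proof. by []. Qed.
Lemma brbLH m n : brb kL m kH n = (half m - n%:~R) *: bas kH (m + n).
Proof. by []. Qed.
Lemma brbIL m n : brb kI m kL n = - ((n - m)%:~R *: bas kI (n + m)).
Proof. by []. Qed.
Lemma brbII m n : brb kI m kI n = 0. Proof. by []. Qed.
Lemma brbIG m n : brb kI m kG n = (m - 2 * n)%:~R *: bas kH (m + n).
Proof. by []. Qed.
Lemma brbIH m n : brb kI m kH n = 0. Proof. by []. Qed.
Lemma brbGL m n : brb kG m kL n =
  - ((half n - m%:~R) *: bas kG (n + m) + (lam * (n + 1)%:~R) *: bas kH (n + m)).
Proof. by []. Qed.
Lemma brbGI m n : brb kG m kI n = - ((n - 2 * m)%:~R *: bas kH (n + m)).
Proof. by []. Qed.
Lemma brbGG m n : brb kG m kG n = bas kI (m + n). Proof. by []. Qed.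
Lemma brbGH m n : brb kG m kH n = 0. Proof. by []. Qed.
Lemma brbHL m n : brb kH m kL n = - ((half n - m%:~R) *: bas kH (n + m)).
Proof. by []. Qed.
Lemma brbHI m n : brb kH m kI n = 0. Proof. by []. Qed.
Lemma brbHG m n : brb kH m kG n = 0. Proof. by []. Qed.
Lemma brbHH m n : brb kH m kH n = 0. Proof. by []. Qed.

Definition brbE := (brbLL, brbLI, brbLG, brbLH, brbIL, brbII, brbIG, brbIH,
  brbGL, brbGI, brbGG, brbGH, brbHL, brbHI, brbHG, brbHH).

Lemma is_linear_partG : is_linear partG.
Proof. by move=> a x y; apply/ffunP => k; rewrite !ffunE; case: eqP; rewrite ?scaler0 ?addr0. Qed.

Lemma is_linear_partD : is_linear partD.
Proof. by move=> a x y; apply/ffunP => k; rewrite !ffunE scalerDr !scalerA mulrC. Qed.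

Lemma partG_L q : partG (bas kL q) = 0.
Proof. by apply/ffunP => k; rewrite !ffunE; case: eqP. Qed.
Lemma partG_I q : partG (bas kI q) = 0.
Proof. by apply/ffunP => k; rewrite !ffunE; case: eqP. Qed.
Lemma partG_G q : partG (bas kG q) = bas kH q.
Proof. by apply/ffunP => k; rewrite !ffunE; case: eqP. Qed.
Lemma partG_H q : partG (bas kH q) = 0.
Proof. by apply/ffunP => k; rewrite !ffunE; case: eqP. Qed.
Lemma partD_L q : partD (bas kL q) = 0.
Proof.
by apply/ffunP => k; rewrite !ffunE; case: eqP => [->|]; rewrite ?scaler0 ?scale0r.
Qed.
Lemma partD_I q : partD (bas kI q) = 2%:R *: bas kI q.
Proof. by apply/ffunP => k; rewrite !ffunE; case: eqP => [->|]; rewrite ?scaler0. Qed.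
Lemma partD_G q : partD (bas kG q) = bas kG q.
Proof. by apply/ffunP => k; rewrite !ffunE; case: eqP => [->|]; rewrite ?scaler0 ?scale1r. Qed.
Lemma partD_H q : partD (bas kH q) = 3%:R *: bas kH q.
Proof. by apply/ffunP => k; rewrite !ffunE; case: eqP => [->|]; rewrite ?scaler0. Qed.

Definition partE := (partG_L, partG_I, partG_G, partG_H,
  partD_L, partD_I, partD_G, partD_H,
  linD is_linear_partG, linZ is_linear_partG, linN is_linear_partG, lin0 is_linear_partG,
  linD is_linear_partD, linZ is_linear_partD, linN is_linear_partD, lin0 is_linear_partD).

Definition leibniz (F : SA -> SA) (x y : SA) : Prop :=
  F (bracket x y) = bracket (F x) y + bracket x (F y).

Lemma leibniz0 x y : leibniz (fun=> 0) x y.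
Proof. by rewrite /leibniz bracket0l bracket0r addr0. Qed.

Lemma leibnizD F G x y : leibniz F x y -> leibniz G x y ->
  leibniz (fun v => F v + G v) x y.
Proof. by rewrite /leibniz bracketDl bracketDr => -> ->; rewrite addrACA. Qed.

Lemma leibnizZ a F x y : leibniz F x y -> leibniz (fun v => a *: F v) x y.
Proof. by rewrite /leibniz bracketZl bracketZr => ->; rewrite scalerDr. Qed.

Lemma leibniz_bas F : is_linear F ->
  (forall k m k' n, leibniz F (bas k m) (bas k' n)) -> forall x y, leibniz F x y.
Proof.
move=> linF Fbas x y; rewrite /leibniz.
have linFl z : is_linear (fun x => bracket (F x) z).
  exact: is_linear_comp (is_linear_bracketl z) linF.
have linFr z : is_linear (fun y => bracket z (F y)).
  exact: is_linear_comp (is_linear_bracketr z) linF.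
move: x; apply: lin_bas_eq.
- exact: is_linear_comp linF (is_linear_bracketl y).
- exact: is_linearD (linFl y) (is_linear_bracketl _).
move=> k m; move: y; apply: lin_bas_eq.
- exact: is_linear_comp linF (is_linear_bracketr _).
- exact: is_linearD (is_linear_bracketr _) (linFr _).
exact: Fbas.
Qed.

End Algebra.

Ltac bracket_simpl :=
  rewrite ?(bracket_bas, brbE, partE, bracket_linE) ?add0r ?addr0.

Ltac coord_eq := apply: SA_coefP => ? ?; rewrite ?coordE /=.

Ltac leibniz_bas_check :=
  match goal with |- leibniz _ _ (bas _ ?k ?m) (bas _ ?k' ?n) =>
    case: (I4P k) => ->; case: (I4P k') => ->;
    rewrite /leibniz; bracket_simpl; rewrite ?(addrC n m); coord_eq;
    rewrite /Defs.half; by field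
  end.

Lemma leibniz_partD (C : numClosedFieldType) k m k' n :
  leibniz 0 (@partD C) (bas C k m) (bas C k' n).
Proof. leibniz_bas_check. Qed.

Section Derivations.
Variable C : numClosedFieldType.
Variable lam : C.
Local Notation SA := (SA C).
Local Notation bas := (bas C).
Local Notation bracket := (bracket lam).
Local Notation partG := (@partG C).
Local Notation partD := (@partD C).
Local Notation leibniz := (leibniz lam).

Lemma leibniz_adL0 k m k' n : leibniz (bracket (bas kL 0)) (bas k m) (bas k' n).
Proof. leibniz_bas_check. Qed.

Lemma leibniz_adI0 k m k' n : leibniz (bracket (bas kI 0)) (bas k m) (bas k' n).
Proof. leibniz_bas_check. Qed.

Lemma leibniz_partG k m k' n : leibniz partG (bas k m) (bas k' n).
Proof. leibniz_bas_check. Qed.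

Section Combination.
Variables a b c d : C.

Definition der_comb (v : SA) : SA :=
  a *: ad lam (bas kL 0) v + b *: ad lam (bas kI 0) v
  + c *: partG v + (if lam == 0 then d *: partD v else 0).

Local Notation d' := (if lam == 0 then d else 0).

Lemma is_linear_der_comb : is_linear der_comb.
Proof.
apply: is_linearD; last first.
  by case: eqP => _; [apply/is_linearZ/is_linear_partD | apply: is_linear0].
apply: is_linearD; last exact/is_linearZ/is_linear_partG.
by apply: is_linearD; apply/is_linearZ/is_linear_bracketr.
Qed.

Lemma leibniz_der_comb x y : leibniz der_comb x y.
Proof.
apply: leibniz_bas is_linear_der_comb _ _ _ => k m k' n.
apply: leibnizD; last first.
  case: eqP => [lam0|_]; last exact: leibniz0.
  by apply: leibnizZ; rewrite lam0; apply: leibniz_partD.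
apply: leibnizD; last exact/leibnizZ/leibniz_partG.
by apply: leibnizD; apply: leibnizZ; [apply: leibniz_adL0 | apply: leibniz_adI0].
Qed.

(* Written in the two-term shape of [Dbas_L] ... [Dbas_H] below, so that a
   superderivation can be matched with [der_comb] coefficientwise. *)
Lemma der_comb_L m : der_comb (bas kL m) =
  (- (m%:~R * a)) *: bas kL m + (- (m%:~R * b)) *: bas kI m.
Proof. rewrite /der_comb /ad; bracket_simpl; case: eqP => _; coord_eq; by ring. Qed.

Lemma der_comb_I m : der_comb (bas kI m) =
  0 *: bas kL m + (2%:R * d' - m%:~R * a) *: bas kI m.
Proof. rewrite /der_comb /ad; bracket_simpl; case: eqP => _; coord_eq; by ring. Qed.

Lemma der_comb_G m : der_comb (bas kG m) =
  (d' - m%:~R * a) *: bas kG m + (lam * a - 2%:R * m%:~R * b + c) *: bas kH m.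
Proof.
rewrite /der_comb /ad; bracket_simpl; case: eqP => _; coord_eq.
all: by rewrite /Defs.half; field.
Qed.

Lemma der_comb_H m : der_comb (bas kH m) =
  0 *: bas kG m + (3%:R * d' - m%:~R * a) *: bas kH m.
Proof.
rewrite /der_comb /ad; bracket_simpl; case: eqP => _; coord_eq.
all: by rewrite /Defs.half; field.
Qed.

Definition der_combE := (der_comb_L, der_comb_I, der_comb_G, der_comb_H).

Lemma der_comb_superder : superder lam false der_comb.
Proof.
have lin := is_linear_der_comb; split => //.
- move=> x [xG xH] /=.
  apply: (lin_ind lin (P := @is_even C) (is_even0 C) (@is_even_lincomb C)) => k i.
  by case: (I4P k) => ->; rewrite ?xG ?xH ?coef0 ?eqxx // => _;
    rewrite der_combE; apply: is_even_bas2.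
- move=> x [xL xI] /=.
  apply: (lin_ind lin (P := @is_odd C) (is_odd0 C) (@is_odd_lincomb C)) => k i.
  by case: (I4P k) => ->; rewrite ?xL ?xI ?coef0 ?eqxx // => _;
    rewrite der_combE; apply: is_odd_bas2.
- by move=> x y; split=> _; rewrite ?expr0 ?scale1r; apply: leibniz_der_comb.
Qed.

Lemma der_comb_deg0 : has_degree 0 der_comb.
Proof.
move=> q x xq; rewrite addr0.
apply: (lin_ind is_linear_der_comb (P := in_deg q) (@in_deg0 C q) (@in_deg_lincomb C q)).
move=> k i nz.
have -> : i = enc q by apply/eqP; apply: contraR nz => /eqP iq; rewrite xq.
by rewrite encK; case: (I4P k) => ->; rewrite der_combE; apply: in_deg_bas2.
Qed.

End Combination.

End Derivations.

Lemma int_step_const (T : Type) (phi : int -> T) :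
  (forall n, phi (n + 1) = phi n) -> forall n, phi n = phi 0.
Proof.
move=> step; have phiP k : phi (Posz k) = phi 0.
  by elim: k => // k IH; rewrite -addn1 PoszD step.
have phiN k : phi (- Posz k) = phi 0.
  elim: k => [|k IH]; first by rewrite oppr0.
  by rewrite -IH -step -addn1 PoszD opprD addrNK.
by case=> k; [exact: phiP | rewrite NegzE; exact: phiN].
Qed.

Lemma int_step_affine (V : zmodType) (g : int -> V) (kap : V) :
  (forall n, g (n + 1) = g n + kap) -> forall n, g n = g 0 + kap *~ n.
Proof.
move=> step n.
have stepD m : g (m + 1) - kap *~ (m + 1) = g m - kap *~ m.
  by rewrite step mulrzDr mulr1z opprD addrACA subrr addr0.
have := @int_step_const _ (fun n => g n - kap *~ n) stepD n.
by rewrite mulr0z subr0 => <-; rewrite subrK.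
Qed.

(* Closes [x = y] by [field] once it is a multiple of a known equation [u = v]. *)
Lemma eq_of_lincomb (R : pzRingType) (x y u v k : R) :
  u = v -> x - y = k * (u - v) -> x = y.
Proof. by move=> -> xy; apply/eqP; rewrite -subr_eq0 xy subrr mulr0. Qed.

Lemma int_sum_offdiag (m : int) : exists n p : int, m = n + p /\ n - 2 * p != 0.
Proof.
have [->|m0] := eqVneq m 0; first by exists 2, (-2).
by exists m, 0; split; [rewrite addr0 | lia].
Qed.

Section IntFunctions.
Variable R : numDomainType.

Lemma intr_mulfI (x : int) (u v : R) :
  x != 0 -> x%:~R * u = x%:~R * v -> u = v.
Proof. by move=> x0; apply: mulfI; rewrite intr_eq0. Qed.

Lemma additive_int_linear (f : int -> R) :
  (forall m n, (m - n)%:~R * f (m + n) = (m - n)%:~R * (f m + f n)) ->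
  forall m, f m = m%:~R * f 1.
Proof.
move=> fmn.
have fD m n : m != n -> f (m + n) = f m + f n.
  by move=> mn; apply: (@intr_mulfI (m - n)); [rewrite subr_eq0 | exact: fmn].
have f0 : f 0 = 0 by apply: (addrI (f 1)); rewrite -fD // !addr0.
have fN1 : f (-1) = - f 1 by apply: (addrI (f 1)); rewrite -fD // !subrr f0.
have f2 : f 2 = f 1 + f 1.
  have := fD 2 (-1) isT; rewrite (_ : 2 + -1 = 1) // fN1 => {1}->.
  by rewrite addrNK.
have step n : f (n + 1) = f n + f 1.
  by have [->|n1] := eqVneq n 1; [exact: f2 | exact: fD].
by move=> m; rewrite (int_step_affine step m) f0 add0r mulrzl.
Qed.

End IntFunctions.

Section Forward.
Variable C : numClosedFieldType.
Variable lam : C.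
Local Notation SA := (SA C).
Local Notation bas := (bas C).
Local Notation half := (Defs.half C).

Variable D : SA -> SA.
Hypothesis superD : superder lam false D.
Hypothesis degD : has_degree 0 D.

Lemma is_linear_D : is_linear D. Proof. by case: superD. Qed.

Definition dcoef k m k' : C := (D (bas k m) k')`_(enc m).

Lemma in_deg_Dbas k m : in_deg m (D (bas k m)).
Proof. by have := degD (@in_deg_bas C k m); rewrite addr0. Qed.

Lemma Dbas_L m :
  D (bas kL m) = dcoef kL m kL *: bas kL m + dcoef kL m kI *: bas kI m.
Proof.
case: superD => _ evD _ _; apply/even_deg_expand/evD/is_even_bas.
  exact: in_deg_Dbas.
by left.
Qed.

Lemma Dbas_I m :
  D (bas kI m) = dcoef kI m kL *: bas kL m + dcoef kI m kI *: bas kI m.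
Proof.
case: superD => _ evD _ _; apply/even_deg_expand/evD/is_even_bas.
  exact: in_deg_Dbas.
by right.
Qed.

Lemma Dbas_G m :
  D (bas kG m) = dcoef kG m kG *: bas kG m + dcoef kG m kH *: bas kH m.
Proof.
case: superD => _ _ odD _; apply/odd_deg_expand/odD/is_odd_bas.
  exact: in_deg_Dbas.
by left.
Qed.

Lemma Dbas_H m :
  D (bas kH m) = dcoef kH m kG *: bas kG m + dcoef kH m kH *: bas kH m.
Proof.
case: superD => _ _ odD _; apply/odd_deg_expand/odD/is_odd_bas.
  exact: in_deg_Dbas.
by right.
Qed.

Definition DbasE := (Dbas_L, Dbas_I, Dbas_G, Dbas_H,
  linD is_linear_D, linZ is_linear_D, linN is_linear_D, lin0 is_linear_D).

Lemma leibniz_Dbas k m k' n : leibniz lam D (bas k m) (bas k' n).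
Proof.
case: superD => _ _ _ lbD.
have [evk|odk] : (k = kL \/ k = kI) \/ (k = kG \/ k = kH).
  by case: (I4P k) => ->; [left; left | left; right | right; left | right; right].
- exact: (lbD _ _).1 (@is_even_bas C k m evk).
- by rewrite /leibniz ((lbD _ _).2 (@is_odd_bas C k m odk)) expr0 scale1r.
Qed.

(* [dcoef_XY_Z m n] is the Z_(m+n)-coordinate of the Leibniz rule for [X_m, Y_n]. *)
Ltac dcoef_relation k k' kk m n :=
  have := leibniz_Dbas k m k' n; rewrite /leibniz; bracket_simpl; rewrite ?DbasE;
  bracket_simpl; rewrite ?(addrC n m);
  move/(congr1 (fun v : SA => (v kk)`_(enc (m + n))));
  rewrite ?coordE /= ?eqxx /=;
  let e := fresh in intro e;
  first [ apply: (eq_of_lincomb (k := 1) e); rewrite /Defs.half; by field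
        | apply: (eq_of_lincomb (k := -1) e); rewrite /Defs.half; by field ].

Lemma dcoef_LL_L m n :
  (m - n)%:~R * dcoef kL (m + n) kL = (m - n)%:~R * (dcoef kL m kL + dcoef kL n kL).
Proof. dcoef_relation kL kL kL m n. Qed.

Lemma dcoef_LL_I m n :
  (m - n)%:~R * dcoef kL (m + n) kI = (m - n)%:~R * (dcoef kL m kI + dcoef kL n kI).
Proof. dcoef_relation kL kL kI m n. Qed.

Lemma dcoef_LI_I m n :
  (m - n)%:~R * dcoef kI (m + n) kI = (m - n)%:~R * (dcoef kL m kL + dcoef kI n kI).
Proof. dcoef_relation kL kI kI m n. Qed.

Lemma dcoef_GG_L m n : dcoef kI (m + n) kL = 0.
Proof. dcoef_relation kG kG kL m n. Qed.

Lemma dcoef_GG_I m n : dcoef kI (m + n) kI = dcoef kG m kG + dcoef kG n kG.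
Proof. dcoef_relation kG kG kI m n. Qed.

Lemma dcoef_IG_G m n :
  (m - 2 * n)%:~R * dcoef kH (m + n) kG = dcoef kI m kL * (half m - n%:~R).
Proof. dcoef_relation kI kG kG m n. Qed.

Lemma dcoef_IG_H m n :
  (m - 2 * n)%:~R * dcoef kH (m + n) kH =
  dcoef kI m kL * (lam * (m + 1)%:~R)
  + (dcoef kI m kI + dcoef kG n kG) * (m - 2 * n)%:~R.
Proof. dcoef_relation kI kG kH m n. Qed.

Lemma dcoef_LG_H m n :
  (half m - n%:~R) * dcoef kG (m + n) kH + lam * (m + 1)%:~R * dcoef kH (m + n) kH =
  dcoef kL m kL * (lam * (m + 1)%:~R) + dcoef kL m kI * (m - 2 * n)%:~R
  + dcoef kG n kG * (lam * (m + 1)%:~R) + dcoef kG n kH * (half m - n%:~R).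
Proof. dcoef_relation kL kG kH m n. Qed.

Local Notation a1 := (dcoef kL 1 kL).
Local Notation b1 := (dcoef kL 1 kI).
Local Notation e0 := (dcoef kG 0 kG).
Local Notation z0 := (dcoef kG 0 kH).

Lemma dcoef_LL m : dcoef kL m kL = m%:~R * a1.
Proof. exact: (additive_int_linear (f := fun m => dcoef kL m kL) dcoef_LL_L). Qed.

Lemma dcoef_LI m : dcoef kL m kI = m%:~R * b1.
Proof. exact: (additive_int_linear (f := fun m => dcoef kL m kI) dcoef_LL_I). Qed.

Lemma dcoef_IL m : dcoef kI m kL = 0.
Proof. by have := dcoef_GG_L m 0; rewrite addr0. Qed.

Lemma dcoef_II m : dcoef kI m kI = m%:~R * a1 + 2%:R * e0.
Proof.
have II0 : dcoef kI 0 kI = 2%:R * e0.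
  by rewrite -[0 in LHS]addr0 dcoef_GG_I mulr2n mulrDl mul1r.
have [->|m0] := eqVneq m 0; first by rewrite II0 mul0r add0r.
by have := dcoef_LI_I m 0; rewrite subr0 dcoef_LL II0; apply: intr_mulfI.
Qed.

Lemma dcoef_GG m : dcoef kG m kG = m%:~R * a1 + e0.
Proof.
have := dcoef_GG_I m 0; rewrite addr0 dcoef_II => e.
by apply: (eq_of_lincomb (k := -1) e); ring.
Qed.

Lemma dcoef_HG m : dcoef kH m kG = 0.
Proof.
have [n [p [-> np]]] := int_sum_offdiag m.
by apply: (intr_mulfI np); rewrite dcoef_IG_G dcoef_IL !mul0r mulr0.
Qed.

Lemma dcoef_HH m : dcoef kH m kH = m%:~R * a1 + 3%:R * e0.
Proof.
have [n [p [-> np]]] := int_sum_offdiag m.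
apply: (intr_mulfI np); rewrite dcoef_IG_H dcoef_IL dcoef_II (dcoef_GG p); ring.
Qed.

Lemma dcoef_GH m : dcoef kG m kH = z0 + m%:~R * (2%:R * b1).
Proof.
rewrite mulrzl; apply: (int_step_affine (g := fun p => dcoef kG p kH)) => n.
have := dcoef_LG_H (-1) (n + 1); rewrite (_ : -1 + (n + 1) = n); last by ring.
rewrite (dcoef_LL (-1)) (dcoef_LI (-1)) (dcoef_GG (n + 1)) (dcoef_HH n) => e.
have n3 : (2 * n + 3 : int) != 0 by lia.
apply: (intr_mulfI n3); apply: (eq_of_lincomb (k := 2%:R) e).
by rewrite /Defs.half; field.
Qed.

Lemma lam_e0 : lam * e0 = 0.
Proof.
have := dcoef_LG_H 0 1.
rewrite add0r (dcoef_LL 0) (dcoef_LI 0) (dcoef_GG 1) (dcoef_HH 1) => e.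
by apply: (eq_of_lincomb (k := 1 / 2%:R) e); rewrite /Defs.half; field.
Qed.

Lemma e0_if_lam : e0 = if lam == 0 then e0 else 0.
Proof.
case: eqP => // /eqP lam0.
by have /eqP := lam_e0; rewrite mulf_eq0 (negbTE lam0) => /eqP.
Qed.

Lemma D_eq_der_comb : D =1 der_comb lam (- a1) (- b1) (z0 + a1 * lam) e0.
Proof.
apply: (lin_bas_eq is_linear_D (is_linear_der_comb _ _ _ _ _)) => k m.
case: (I4P k) => ->; rewrite DbasE der_combE -?e0_if_lam; congr (_ *: _ + _ *: _);
  rewrite ?(dcoef_LL m, dcoef_LI m, dcoef_IL m, dcoef_II m, dcoef_GG m, dcoef_GH m,
            dcoef_HG m, dcoef_HH m); ring.
Qed.

End Forward.

Lemma der_comb_eq0 (C : numClosedFieldType) (lam a b c d : C) :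
  der_comb lam a b c d =1 (fun=> 0) ->
  [/\ a = 0, b = 0, c = 0 & (lam = 0 -> d = 0)].
Proof.
move=> h0.
have [/eqP a0 /eqP b0] : a == 0 /\ b == 0.
  have := h0 (bas C kL 1); rewrite der_comb_L => /bas2_eq0 [] // /eqP.
  by rewrite mul1r !oppr_eq0 => -> /eqP; rewrite mul1r oppr_eq0.
have := h0 (bas C kG 0); rewrite der_comb_G a0 b0 => /bas2_eq0 [] //.
rewrite !(mulr0, mul0r, oppr0, addr0, add0r) => d0 c0; split => // lam0.
by move: d0; rewrite lam0 eqxx.
Qed.

Lemma eq_superder (C : numClosedFieldType) (lam : C) p (D F : SA C -> SA C) :
  D =1 F -> superder lam p F -> superder lam p D.
Proof.
move=> eDF [linF evF odF lbF]; split.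
- by move=> a x y; rewrite !eDF.
- by move=> x; rewrite eDF; apply: evF.
- by move=> x; rewrite eDF; apply: odF.
- by move=> x y; rewrite !eDF; apply: lbF.
Qed.

Lemma eq_has_degree (C : numClosedFieldType) r (D F : SA C -> SA C) :
  D =1 F -> has_degree r F -> has_degree r D.
Proof. by move=> eDF degF q x; rewrite eDF; apply: degF. Qed.

Theorem lemma2p3 (C : numClosedFieldType) (lam : C) :
  (forall D : SA C -> SA C,
     (superder lam false D /\ has_degree 0 D) <->
     exists a b c d : C,
       forall v : SA C,
         D v = a *: ad lam (bas C kL 0) v + b *: ad lam (bas C kI 0) v
               + c *: partG v + (if lam == 0 then d *: partD v else 0))
  /\
  (forall a b c d : C,
     (forall v : SA C,
        a *: ad lam (bas C kL 0) v + b *: ad lam (bas C kI 0) v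
        + c *: partG v + (if lam == 0 then d *: partD v else 0) = 0) ->
     [/\ a = 0, b = 0, c = 0 & (lam = 0 -> d = 0)]).
Proof.
split=> [D|a b c d]; last exact: der_comb_eq0.
split=> [[superD degD] | [a [b [c [d eqD]]]]].
  by do 4 eexists; apply: D_eq_der_comb superD degD.
split; [exact: eq_superder eqD (der_comb_superder _ _ _ _ _)
       | exact: eq_has_degree eqD (der_comb_deg0 _ _ _ _ _)].
Qed.
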